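(* If $a_j\neq0$ for $1\le j\le 4$, then $HC_F(\mathbf v,d)\cap(\hat\ell_1\cup\hat\ell_2\cup\hat\ell_3\cup\hat\ell_4)=\{\mathbf p_1,\mathbf p_2,\mathbf p_3,\mathbf p_4\}$, and these four points are singular points of $HC_F(\mathbf v,d)$.
   Context: On $\mathbb{C}P^4$ use homogeneous coordinates $[w_0,w_1,w_2,w_3,x_1]$. Let $Y$ be the surface $w_0w_3-w_1w_2=0$, $x_1^2+w_0w_3=0$. For parameters $[\mathbf v,d]=[v_{11},v_{12},v_{21},v_{22},d]\in\mathbb{C}P^4$ (complex, not all zero), $HC_F(\mathbf v,d)$ is the set of points of $Y$ satisfying $A(\mathbf w)x_1+C(\mathbf w)=0$, where $A(\mathbf w)=2\big(v_{22}(w_3-w_0)-v_{12}(w_2-w_1)\big)$ and $C(\mathbf w)=a_1w_0w_1+a_2w_0w_2+a_3w_1w_3+a_4w_2w_3$, with $a_1=v_{11}-v_{21}-d$, $a_2=-v_{11}-v_{21}+d$, $a_3=v_{11}+v_{21}+d$, $a_4=-v_{11}+v_{21}-d$. The lines on $Y$ are $\hat\ell_1=\{[w_0,w_1,0,0,0]\}$, $\hat\ell_2=\{[w_0,0,w_2,0,0]\}$, $\hat\ell_3=\{[0,0,w_2,w_3,0]\}$, $\hat\ell_4=\{[0,w_1,0,w_3,0]\}$. The points are $\mathbf p_1=[1,0,0,0,0]$, $\mathbf p_2=[0,0,0,1,0]$, $\mathbf p_3=[0,1,0,0,0]$, $\mathbf p_4=[0,0,1,0,0]$. A point of $HC_F(\mathbf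 v,d)$ is singular if the Jacobian matrix of the three defining polynomials $w_0w_3-w_1w_2$, $x_1^2+w_0w_3$, $A(\mathbf w)x_1+C(\mathbf w)$ has rank less than $3$ there. *)

From HB Require Import structures.
From mathcomp Require Import all_boot all_order all_algebra.
From mathcomp Require Import reals.
From mathcomp Require Import complex.
From mathcomp Require Import mpoly.
Set Implicit Arguments. Unset Strict Implicit. Unset Printing Implicit Defensive.
Import Order.TTheory GRing.Theory Num.Theory.
Local Open Scope ring_scope.

(* Homogeneous coordinates on CP^4 are indexed by 'I_5:
   index 0 = w0, 1 = w1, 2 = w2, 3 = w3, 4 = x1. *)
Section HCF.
Variable R : realType.
Local Notation C := R[i].
Implicit Types (x y : 'I_5 -> C).

Definition nonzero_pt x := exists k : 'I_5, x k != 0.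
Definition proj_eq x y := exists c : C, c != 0 /\ forall k, x k = c * y k.

Variables v11 v12 v21 v22 d : C.

Definition a1 : C := v11 - v21 - d.
Definition a2 : C := - v11 - v21 + d.
Definition a3 : C := v11 + v21 + d.
Definition a4 : C := - v11 + v21 - d.

Definition XX (k : nat) : {mpoly C[5]} := 'X_(inord k).

Definition FY1 : {mpoly C[5]} := XX 0 * XX 3 - XX 1 * XX 2.
Definition FY2 : {mpoly C[5]} := XX 4 ^+ 2 + XX 0 * XX 3.
Definition Apoly : {mpoly C[5]} :=
  2%:R *: (v22 *: (XX 3 - XX 0) - v12 *: (XX 2 - XX 1)).
Definition Cpoly : {mpoly C[5]} :=
  a1 *: (XX 0 * XX 1) + a2 *: (XX 0 * XX 2) + a3 *: (XX 1 * XX 3)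
  + a4 *: (XX 2 * XX 3).
Definition FH : {mpoly C[5]} := Apoly * XX 4 + Cpoly.

Definition HCpolys (j : nat) : {mpoly C[5]} :=
  match j with 0 => FY1 | 1 => FY2 | _ => FH end.

Definition in_HCF x :=
  nonzero_pt x /\ FY1.@[x] = 0 /\ FY2.@[x] = 0 /\ FH.@[x] = 0.

Definition jacobian x : 'M[C]_(3, 5) :=
  \matrix_(j < 3, k < 5) (mderiv k (HCpolys j)).@[x].

Definition singular_pt x := in_HCF x /\ (\rank (jacobian x) < 3)%N.

End HCF.

Definition on_l1 {C : ringType} (x : 'I_5 -> C) :=
  x (inord 2) = 0 /\ x (inord 3) = 0 /\ x (inord 4) = 0.
Definition on_l2 {C : ringType} (x : 'I_5 -> C) :=
  x (inord 1) = 0 /\ x (inord 3) = 0 /\ x (inord 4) = 0.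
Definition on_l3 {C : ringType} (x : 'I_5 -> C) :=
  x (inord 0) = 0 /\ x (inord 1) = 0 /\ x (inord 4) = 0.
Definition on_l4 {C : ringType} (x : 'I_5 -> C) :=
  x (inord 0) = 0 /\ x (inord 2) = 0 /\ x (inord 4) = 0.
Definition on_lines {C : ringType} (x : 'I_5 -> C) :=
  on_l1 x \/ on_l2 x \/ on_l3 x \/ on_l4 x.

Definition ept {C : ringType} (k : nat) : 'I_5 -> C := fun i => (val i == k)%:R.
Definition p1 {C : ringType} : 'I_5 -> C := ept 0.
Definition p2 {C : ringType} : 'I_5 -> C := ept 3.
Definition p3 {C : ringType} : 'I_5 -> C := ept 1.
Definition p4 {C : ringType} : 'I_5 -> C := ept 2.

From HB Require Import structures.
From mathcomp Require Import all_boot all_order all_algebra.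
From mathcomp Require Import reals complex mpoly.
From mathcomp Require Import ring.
Import GRing.Theory Num.Theory.
Set Implicit Arguments. Unset Strict Implicit.
Local Open Scope ring_scope.

(* On each line \hat\ell_i the quadrics FY1 and FY2 vanish identically and FH
   reduces to one of the a_j times the product of the two remaining coordinates,
   so when a_j <> 0 a point of the line lies on HC_F exactly when it is one of
   the two coordinate vertices of the line.  At p1 and p2 the gradients of FY1 and FY2
   coincide, and at p3 and p4 the gradient of FY2 vanishes, so the Jacobian has
   two dependent rows there. *)

Section RankDeficient.
Variables (F : fieldType) (m n : nat).
Implicit Type A : 'M[F]_(m, n).

Lemma mxrank_lt_row_sub A i : (row i A <= row' i A)%MS -> (\rank A < m)%N.
Proof. by move=> sub_i; rewrite ltnNge row_leq_rank; apply/row_freePn; exists i. Qed.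

Lemma mxrank_lt_row0 A i : row i A = 0 -> (\rank A < m)%N.
Proof. by move=> Ai0; apply: (@mxrank_lt_row_sub _ i); rewrite Ai0 sub0mx. Qed.

Lemma mxrank_lt_row_eq A i j : i != j -> row i A = row j A -> (\rank A < m)%N.
Proof.
case/unlift_some=> j' -> _ eq_ij; apply: (@mxrank_lt_row_sub _ i).
by apply: (@eq_row_sub _ _ _ _ _ j'); rewrite eq_ij; apply/rowP => k; rewrite !mxE.
Qed.

End RankDeficient.

Section HCFLines.
Variable R : realType.
Local Notation C := R[i].
Implicit Types x : 'I_5 -> C.
Local Notation w x k := (x (inord k)).

Lemma ept_inord (j k : nat) : (k < 5)%N -> @ept C j (inord k) = (k == j)%:R.
Proof. by move=> lt_k5; rewrite /ept /= inordK. Qed.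

Lemma proj_eq_ept_coord x j : (j < 5)%N -> proj_eq x (ept j) ->
  exists2 c : C, c != 0 & forall k, (k < 5)%N -> w x k = (k == j)%:R * c.
Proof.
by move=> _ [c [c_neq0 xE]]; exists c => // k lt_k5; rewrite xE ept_inord // mulrC.
Qed.

Lemma proj_eq_ept_of_support x j : (j < 5)%N -> w x j != 0 ->
  (forall k, (k < 5)%N -> k != j -> w x k = 0) -> proj_eq x (ept j).
Proof.
move=> lt_j5 xj_neq0 supp; exists (w x j); split=> // k.
rewrite -[k]inord_val ept_inord //; have [->|ne_kj] := eqVneq (val k) j.
  by rewrite mulr1.
by rewrite mulr0 supp.
Qed.

Lemma nonzero_pt_support x j :
  nonzero_pt x -> (forall k, (k < 5)%N -> k != j -> w x k = 0) -> w x j != 0.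
Proof.
case=> l xl_neq0 supp; apply: contraNneq xl_neq0 => xj0.
rewrite -[l]inord_val; have [->|ne_lj] := eqVneq (val l) j; first exact/eqP.
by rewrite supp.
Qed.

Lemma proj_eq_ept_pair x j k : (j < 5)%N -> (k < 5)%N -> nonzero_pt x ->
  (forall l, (l < 5)%N -> l != j -> l != k -> w x l = 0) -> w x j * w x k = 0 ->
  proj_eq x (ept j) \/ proj_eq x (ept k).
Proof.
move=> lt_j5 lt_k5 nz supp.
have vertex l l' : (l' < 5)%N ->
    (forall i, (i < 5)%N -> i != l -> i != l' -> w x i = 0) -> w x l = 0 ->
    proj_eq x (ept l').
  move=> lt_l'5 supp' xl0; have supp_l' i : (i < 5)%N -> i != l' -> w x i = 0.
    by move=> lt_i5 ne_il'; have [->//|ne_il] := eqVneq i l; exact: supp'.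
  exact: proj_eq_ept_of_support lt_l'5 (nonzero_pt_support nz supp_l') supp_l'.
move/eqP; rewrite mulf_eq0 => /orP[/eqP xj0|/eqP xk0].
  by right; exact: (vertex j).
by left; apply: (vertex k) => // i lt_i5 ne_ik ne_ij; exact: supp.
Qed.

Lemma proj_eq_refl x : proj_eq x x.
Proof. by exists 1; split=> [|k]; rewrite ?oner_eq0 ?mul1r. Qed.

Lemma meval_XX x k : (XX R k).@[x] = w x k.
Proof. by rewrite mevalXU. Qed.

Lemma meval_mderiv_XX x (k : 'I_5) j :
  (j < 5)%N -> (mderiv k (XX R j)).@[x] = (val k == j)%:R.
Proof.
move=> lt_j5; rewrite mderivX mevalZ mnm1E.
have [<-|ne_kj] := eqVneq (inord j) k; last first.
  by rewrite mulr0n mul0r; case: eqP => // kj; case/eqP: ne_kj; rewrite -kj inord_val.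
have -> : (U_(inord j) - U_(inord j) = 0 :> 'X_{1.. 5})%MM.
  by apply/mnmP => l; rewrite mnmBE subnn mnm0E.
by rewrite mpolyX0 meval1 mulr1 /= inordK // eqxx.
Qed.

Lemma meval_FY1 x : (FY1 R).@[x] = w x 0 * w x 3 - w x 1 * w x 2.
Proof. by rewrite mevalB !mevalM !meval_XX. Qed.

Lemma meval_FY2 x : (FY2 R).@[x] = w x 4 ^+ 2 + w x 0 * w x 3.
Proof. by rewrite mevalD !mevalM !meval_XX. Qed.

Lemma meval_mderiv_FY1 x (k : 'I_5) : (mderiv k (FY1 R)).@[x] =
  (val k == 0)%:R * w x 3 + w x 0 * (val k == 3)%:R
  - ((val k == 1)%:R * w x 2 + w x 1 * (val k == 2)%:R).
Proof.
by rewrite /FY1 mderivB !mderivM !(mevalD, mevalN, mevalM) !meval_XX !meval_mderiv_XX.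
Qed.

Lemma meval_mderiv_FY2 x (k : 'I_5) : (mderiv k (FY2 R)).@[x] =
  (val k == 4)%:R * w x 4 + w x 4 * (val k == 4)%:R
  + ((val k == 0)%:R * w x 3 + w x 0 * (val k == 3)%:R).
Proof.
by rewrite /FY2 expr2 mderivD !mderivM !(mevalD, mevalM) !meval_XX !meval_mderiv_XX.
Qed.

Variables v11 v12 v21 v22 d : C.
Local Notation a1 := (a1 v11 v21 d).
Local Notation a2 := (a2 v11 v21 d).
Local Notation a3 := (a3 v11 v21 d).
Local Notation a4 := (a4 v11 v21 d).
Local Notation in_HCF := (in_HCF v11 v12 v21 v22 d).

Lemma meval_FH x : (FH v11 v12 v21 v22 d).@[x] =
  2%:R * (v22 * (w x 3 - w x 0) - v12 * (w x 2 - w x 1)) * w x 4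
  + (a1 * (w x 0 * w x 1) + a2 * (w x 0 * w x 2)
     + a3 * (w x 1 * w x 3) + a4 * (w x 2 * w x 3)).
Proof. by rewrite /FH /Apoly /Cpoly !(mevalD, mevalN, mevalM, mevalZ) !meval_XX. Qed.

Lemma proj_eq_ept_in_HCF_on_lines x j :
  (j < 4)%N -> proj_eq x (ept j) -> in_HCF x /\ on_lines x.
Proof.
move=> lt_j4; have lt_j5 := ltnW lt_j4.
move=> /(proj_eq_ept_coord lt_j5)[c c_neq0 xE]; do ![split].
- by exists (inord j); rewrite xE // eqxx mul1r.
- by rewrite meval_FY1 !xE //; case: j {lt_j5 xE} lt_j4 => [|[|[|[|]]]] //= _; ring.
- by rewrite meval_FY2 !xE //; case: j {lt_j5 xE} lt_j4 => [|[|[|[|]]]] //= _; ring.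
- by rewrite meval_FH !xE //; case: j {lt_j5 xE} lt_j4 => [|[|[|[|]]]] //= _; ring.
- rewrite /on_lines /on_l1 /on_l2 /on_l3 /on_l4 !xE //.
  by case: j {lt_j5 xE} lt_j4 => [|[|[|[|]]]] //= _; rewrite ?mul0r; tauto.
Qed.

Lemma ept_in_HCF j : (j < 4)%N -> in_HCF (ept j).
Proof.
by move=> lt_j4; case: (proj_eq_ept_in_HCF_on_lines lt_j4 (proj_eq_refl (ept j))).
Qed.

Local Notation jacobian := (jacobian v11 v12 v21 v22 d).

Lemma jacobian_row x (i : 'I_3) :
  row i (jacobian x) = \row_k (mderiv k (HCpolys v11 v12 v21 v22 d i)).@[x].
Proof. by apply/rowP => k; rewrite !mxE. Qed.

Lemma singular_pt_ept_quadric_gradients_eq j : (j == 0)%N || (j == 3)%N ->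
  singular_pt v11 v12 v21 v22 d (ept j).
Proof.
move=> j03; have lt_j4 : (j < 4)%N by case/orP: j03 => /eqP->.
split; first exact: ept_in_HCF.
apply: (@mxrank_lt_row_eq _ _ _ _ 0 1) => //; rewrite !jacobian_row.
apply/rowP => k; rewrite !mxE /= meval_mderiv_FY1 meval_mderiv_FY2 !ept_inord //.
by case/orP: j03 => /eqP->; case: k => [[|[|[|[|[|k]]]]] ?] //=; ring.
Qed.

Lemma singular_pt_ept_FY2_critical j : (j == 1)%N || (j == 2)%N ->
  singular_pt v11 v12 v21 v22 d (ept j).
Proof.
move=> j12; have lt_j4 : (j < 4)%N by case/orP: j12 => /eqP->.
split; first exact: ept_in_HCF.
apply: (@mxrank_lt_row0 _ _ _ _ 1); rewrite jacobian_row.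
apply/rowP => k; rewrite !mxE /= meval_mderiv_FY2 !ept_inord //.
by case/orP: j12 => /eqP->; case: k => [[|[|[|[|[|k]]]]] ?] //=; ring.
Qed.

Hypotheses (a1_neq0 : a1 != 0) (a2_neq0 : a2 != 0)
           (a3_neq0 : a3 != 0) (a4_neq0 : a4 != 0).

Lemma in_HCF_on_lines_vertex x : in_HCF x -> on_lines x ->
  [\/ proj_eq x p1, proj_eq x p2, proj_eq x p3 | proj_eq x p4].
Proof.
case=> nz [_ [_]]; rewrite meval_FH.
have vertices j k (a : C) : (j < 5)%N -> (k < 5)%N -> a != 0 ->
    (forall l, (l < 5)%N -> l != j -> l != k -> w x l = 0) ->
    a * (w x j * w x k) = 0 -> proj_eq x (ept j) \/ proj_eq x (ept k).
  move=> lt_j5 lt_k5 a_neq0 supp /eqP; rewrite mulf_eq0 (negbTE a_neq0) => /eqP.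
  exact: proj_eq_ept_pair.
move=> FH0; case=> [[x2 [x3 x4]]|[[x1 [x3 x4]]|[[x0 [x1 x4]]|[x0 [x2 x4]]]]].
- have [||p|p] := vertices 0%N 1%N a1 isT isT a1_neq0;
    [by case=> [|[|[|[|[|]]]]] | by rewrite -FH0 x2 x3 x4; ring | exact: Or41 | exact: Or43].
- have [||p|p] := vertices 0%N 2%N a2 isT isT a2_neq0;
    [by case=> [|[|[|[|[|]]]]] | by rewrite -FH0 x1 x3 x4; ring | exact: Or41 | exact: Or44].
- have [||p|p] := vertices 2%N 3%N a4 isT isT a4_neq0;
    [by case=> [|[|[|[|[|]]]]] | by rewrite -FH0 x0 x1 x4; ring | exact: Or44 | exact: Or42].
- have [||p|p] := vertices 1%N 3%N a3 isT isT a3_neq0;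
    [by case=> [|[|[|[|[|]]]]] | by rewrite -FH0 x0 x2 x4; ring | exact: Or43 | exact: Or42].
Qed.

End HCFLines.

Theorem lemma5p8 (R : realType) (v11 v12 v21 v22 d : R[i]) :
  [|| v11 != 0, v12 != 0, v21 != 0, v22 != 0 | d != 0] ->
  a1 v11 v21 d != 0 -> a2 v11 v21 d != 0 ->
  a3 v11 v21 d != 0 -> a4 v11 v21 d != 0 ->
  (* HC_F(v,d) ∩ (l1 ∪ l2 ∪ l3 ∪ l4) = {p1,p2,p3,p4} as subsets of CP^4 *)
  ((forall x : 'I_5 -> R[i],
      in_HCF v11 v12 v21 v22 d x /\ on_lines x <->
      [\/ proj_eq x p1, proj_eq x p2, proj_eq x p3 | proj_eq x p4])
  (* and p1..p4 are singular points of HC_F(v,d) *)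
  /\ (singular_pt v11 v12 v21 v22 d p1 /\ singular_pt v11 v12 v21 v22 d p2 /\
      singular_pt v11 v12 v21 v22 d p3 /\ singular_pt v11 v12 v21 v22 d p4)).
Proof.
move=> _ a1_neq0 a2_neq0 a3_neq0 a4_neq0; split.
  move=> x; split=> [[HCFx lines_x]|].
    exact: (in_HCF_on_lines_vertex a1_neq0 a2_neq0 a3_neq0 a4_neq0 HCFx lines_x).
  by case=> /proj_eq_ept_in_HCF_on_lines; apply.
split; first exact: singular_pt_ept_quadric_gradients_eq.
split; first exact: singular_pt_ept_quadric_gradients_eq.
by split; exact: singular_pt_ept_FY2_critical.
Qed.
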